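(* Let $G=(V,E)$ be a social network with seller $s$ and buyers $N$, and let the fair diffusion mechanism (FDM) be as defined in the context. Then FDM is individually rational: for every buyer $i\in N$, every true type profile $\theta$, and every feasible action profile $a\in\mathcal{F}(\theta)$ in which $i$ participates with $a_i=(v_i,r_i')$ (i.e. $i$ reports her true valuation $v_i$ and an arbitrary set $r_i'\subseteq r_i$ of invited neighbours), we have $u_i(\theta_i,a)=\pi_i(a)v_i-p_i(a)\ge 0$.
   Context: Model. A seller $s$ sells one item on an undirected graph $G=(V,E)$ with $V=N\cup\{s\}$, $N=\{1,\dots,n\}$ the buyers. Each buyer $i$ has neighbour set $r_i\subseteq V$ and private valuation $v_i\ge 0$; her type is $\theta_i=(v_i,r_i)$; the seller's valuation is $0$ and $r_s$ denotes the seller's neighbours. Each buyer reports an action $a_i=(v_i',r_i')$ with $v_i'\ge0$ the reported valuation and $r_i'\subseteq r_i$ the neighbours she invites, or $a_i=nil$ if she does not participate. A profile $a$ is feasible ($a\in\mathcal{F}(\theta)$) if every $i$ with $a_i\neq nil$ is reachable by a path $s,k_1,\dots,k_m,i$ with $k_1\in r_s$, $k_{t+1}\in r'_{k_t}$ and $i\in r'_{k_m}$. All graph notions below refer to this reported network (participating buyers, with $j$ reachable from $i$ when $j\in r_i'$, and from $s$ when $j\in r_s$); $d_i$ is the length of the shortest such path from $s$ to $i$. A mechanism gives an allocation $\pi_i(a)\in\{0,1\}$ (at most one winner) and payments $p_i(a)\in\mathbb{R}$ (negative means $i$ receives money); buyer utility is $u_i(\theta_i,a)=\pi_i(a)v_i-p_i(a)$,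 and the seller's revenue is $\sum_{i\in N}p_i(a)$. Definitions. A set $D\subseteq N$ is a cut set of buyer $i$ if no path from $s$ to $i$ exists without $D$; it is a minimal cut set if no proper subset is a cut set. $j$ is a critical ancestor of $i$ if $j$ belongs to a minimal cut set of $i$; a strong critical ancestor if $\{j\}$ is a minimal cut set of $i$; a weak critical ancestor if critical but not strong. $V_i=\{j\in N: i$ is a strong critical ancestor of $j\}$ (so $i\in V_i$); for $K\subseteq N$, $N_{-K}=N\setminus\bigcup_{i\in K}V_i$, and $N_{-i}=N_{-\{i\}}$. For $D\subseteq N$, $v_D^{1^{st}}=\max_{i\in D}v_i'$, and $g_D^{1^{st}}\in\arg\max_{i\in D}v^{1^{st}}_{V_i}$ (random tie-breaking). The strong critical ancestor sequence of $i$ is $C_i=(c_1^i,\dots,c_k^i)$, the strong critical ancestors of $i$ ordered by strictly increasing depth, with $c_k^i=i$. FDM. Let $h\in\arg\max_{i\in N}v_i'$ (random tie-breaking) and $C=(c_1,\dots,c_h)$ its strong critical ancestor sequence. For consecutive $c_j,c_{j+1}$, let $M_{c_jc_{j+1}}$ be the set of weak critical ancestors of $h$ lying on some simple path from $c_j$ to $c_{j+1}$ (for the last element the corresponding set $\{c_{j+1}\}\cup M_{c_jc_{j+1}}$ is empty). Allocation: the item goes to the first $c_j\in C$ (smallest $j$) with $v'_{c_j}=v^{1^{st}}_{N_{-(\{c_{j+1}\}\cup M_{c_jc_{j+1}})}}$; call it $c_w$, and let $\hat C=(c_1,\dots,c_w)$. Rewards: for $c_j\in\hat C$ (with $j\ge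 2$), $R_{c_j}=\big(v^{1^{st}}_{N_{-(\{c_j\}\cup \{g^{1^{st}}_{M_{c_{j-1}c_j}}\})}}-v^{1^{st}}_{N_{-(\{c_j\}\cup M_{c_{j-1}c_j})}}\big)/(|M_{c_{j-1}c_j}|+1)$; for $i\in M_{c_{j-1}c_j}$, $R_i=\big(v^{1^{st}}_{N_{-(\{i\}\cup\{c_j\})}}-v^{1^{st}}_{N_{-(\{c_j\}\cup M_{c_{j-1}c_j})}}\big)/(|M_{c_{j-1}c_j}|+1)$; otherwise $R_i=0$. Payments: $p_{c_j}=v^{1^{st}}_{N_{-c_j}}-v^{1^{st}}_{N_{-(\{c_{j+1}\}\cup M_{c_jc_{j+1}})}}-R_{c_j}$ for $c_j\in\hat C$, $j<w$; $p_{c_w}=v^{1^{st}}_{N_{-c_w}}-R_{c_w}$; $p_i=-R_i$ for $i\in M_{c_{j-1}c_j}$, $2\le j\le w$; $p_i=0$ otherwise. *)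

From mathcomp Require Import all_boot all_order all_algebra.
Set Implicit Arguments. Unset Strict Implicit. Unset Printing Implicit Defensive.
Import Order.TTheory GRing.Theory Num.Theory.
Local Open Scope ring_scope.

(* Buyers are 'I_n; the seller s is represented by [None] in [option 'I_n].
   Neighbour sets are sets of buyers (edges back to the seller are irrelevant
   for reachability from the seller).
   An action profile: [a i = None] is nil (non-participation),
   [a i = Some (v', r')] is the reported valuation and invited neighbours. *)
Definition profile (R : Type) (n : nat) := 'I_n -> option (R * {set 'I_n}).

Section FDM.
Variables (R : realFieldType) (n : nat).
Variable rs : {set 'I_n}.
Variable a : profile R n.

Definition part (i : 'I_n) : bool := a i != None.
Definition P : {set 'I_n} := [set i | part i].
Definition vrep (i : 'I_n) : R := if a i is Some (x, _) then x else 0.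
Definition rrep (i : 'I_n) : {set 'I_n} := if a i is Some (_, s) then s else set0.

Definition edge (D : {set 'I_n}) (x y : option 'I_n) : bool :=
  match x, y with
  | None, Some j => [&& j \in rs, part j & j \notin D]
  | Some i, Some j => [&& part i, part j, i \notin D, j \notin D & j \in rrep i]
  | _, _ => false
  end.

Definition reach (D : {set 'I_n}) (i : 'I_n) : bool :=
  connect (edge D) None (Some i).

Definition cutset (i : 'I_n) (D : {set 'I_n}) : bool := ~~ reach D i.
Definition mincut (i : 'I_n) (D : {set 'I_n}) : bool := minset (cutset i) D.
Definition critical (j i : 'I_n) : bool := [exists D, mincut i D && (j \in D)].
Definition strong (j i : 'I_n) : bool := mincut i [set j].
Definition weak (j i : 'I_n) : bool := critical j i && ~~ strong j i.

Definition Vset (i : 'I_n) : {set 'I_n} := [set j | strong i j].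
Definition Nminus (K : {set 'I_n}) : {set 'I_n} :=
  P :\: \bigcup_(j in K) Vset j.
(* v^{1st}_D (0 for the empty set) *)
Definition vmax (D : {set 'I_n}) : R := \big[Order.max/0]_(j in D) vrep j.

(* depth d_i : length of a shortest path from s in the reported network *)
Definition layer (k : nat) : {set option 'I_n} :=
  iter k (fun S => S :|: [set y | [exists x in S, edge set0 x y]]) [set None].
Definition depth (i : 'I_n) : nat :=
  find (fun k => Some i \in layer k) (iota 0 n.+1).

Definition Cseq (i : 'I_n) : seq 'I_n :=
  sort (fun x y => depth x <= depth y)%N (enum [set j | strong j i]).

Definition adj (x y : 'I_n) : bool := [&& part x, part y & y \in rrep x].

(* w lies on some simple path from x to y; a simple path visits at most n
   buyers, so it is encoded as a prefix of an n-tuple *)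
Definition onpath (x y w : 'I_n) : bool :=
  [exists t : n.-tuple 'I_n, exists k : 'I_n.+1,
     let p := take k t in
     [&& path adj x p, last x p == y, uniq (x :: p) & w \in x :: p]].

Variable h : 'I_n.
Variable gtb : {set 'I_n} -> 'I_n.

Definition Mset (x y : 'I_n) : {set 'I_n} := [set w | weak w h && onpath x y w].
Definition gset (D : {set 'I_n}) : {set 'I_n} :=
  if D == set0 then set0 else [set gtb D].

Definition C : seq 'I_n := Cseq h.
Definition c (j : nat) : 'I_n := nth h C j.
(* M_{c_j c_{j+1}} (0-indexed) *)
Definition Mseg (j : nat) : {set 'I_n} := Mset (c j) (c j.+1).
Definition Kset (j : nat) : {set 'I_n} :=
  if (j.+1 < size C)%N then c j.+1 |: Mseg j else set0.
(* winner index w (0-indexed) *)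
Definition widx : nat :=
  find (fun j => vrep (c j) == vmax (Nminus (Kset j))) (iota 0 (size C)).

(* reward of c_j, j >= 1 (0-indexed) *)
Definition Rc (j : nat) : R :=
  let M := Mseg j.-1 in
  (vmax (Nminus (c j |: gset M)) - vmax (Nminus (c j |: M))) / (#|M|%:R + 1).
(* reward of i in M_{c_{j-1} c_j} *)
Definition RM (i : 'I_n) (j : nat) : R :=
  let M := Mseg j.-1 in
  (vmax (Nminus [set i; c j]) - vmax (Nminus (c j |: M))) / (#|M|%:R + 1).

Definition alloc (i : 'I_n) : bool := (widx < size C)%N && (i == c widx).

Definition payment (i : 'I_n) : R :=
  if (i \in C) && (index i C <= widx)%N then
    let j := index i C in
    (if (j < widx)%N then vmax (Nminus [set c j]) - vmax (Nminus (Kset j))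
     else vmax (Nminus [set c j]))
    - (if j == 0%N then 0 else Rc j)
  else
    let j := find (fun j => [&& 0 < j, j <= widx & i \in Mseg j.-1]%N)
                  (iota 0 (size C)) in
    if (j < size C)%N then - RM i j else 0.

Definition utility (i : 'I_n) (vi : R) : R :=
  (if alloc i then vi else 0) - payment i.

End FDM.

Definition undirected (n : nat) (r : 'I_n -> {set 'I_n}) : Prop :=
  forall i j, (j \in r i) = (i \in r j).

Definition feasible (R : realFieldType) (n : nat) (rs : {set 'I_n})
  (r : 'I_n -> {set 'I_n}) (a : profile R n) : Prop :=
  forall i, part a i ->
    [/\ rrep a i \subset r i, 0 <= vrep a i & reach rs a set0 i].

Definition is_highest (R : realFieldType) (n : nat) (a : profile R n)
  (h : 'I_n) : Prop :=
  part a h /\ forall j, part a j -> vrep a j <= vrep a h.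

Definition valid_tiebreak (R : realFieldType) (n : nat) (rs : {set 'I_n})
  (a : profile R n) (gtb : {set 'I_n} -> 'I_n) : Prop :=
  forall D : {set 'I_n}, D != set0 ->
    gtb D \in D /\
    forall j, j \in D -> vmax a (Vset rs a j) <= vmax a (Vset rs a (gtb D)).

(* Buyers outside the winner's chain C pay minus a reward, and every reward is
   nonnegative because removing more buyers can only lower the highest
   remaining bid. A chain member c_j with j <= w pays at most
   v^1st(N_{-c_j}) - v^1st(N_{-K_j}), where K_j = {c_{j+1}} ∪ M_{c_j c_{j+1}};
   the winner c_w bids exactly v^1st(N_{-K_w}). Both bounds rest on
   N_{-c_j} ⊆ N_{-K_j}: strong critical ancestors of h form a chain ordered by
   depth, so c_j is a strong critical ancestor of c_{j+1} and of every vertex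
   on a simple path from c_j to c_{j+1}, whence c_j dominates every member of
   K_j. *)
From Pilot Require Import Defs.
From mathcomp Require Import all_boot all_order all_algebra.
From mathcomp Require Import lra.
Import Order.TTheory GRing.Theory Num.Theory.
Set Implicit Arguments. Unset Strict Implicit. Unset Printing Implicit Defensive.

Lemma split_last_occurrence (T : eqType) (x : T) (p : seq T) : x \in p ->
  exists p1 p2, p = p1 ++ x :: p2 /\ x \notin p2.
Proof.
elim: p => [|y p IHp] //; rewrite inE; case Hx: (x \in p).
  by move=> _; have [p1 [p2 [-> Hx2]]] := IHp Hx; exists (y :: p1), p2.
by rewrite orbF => /eqP <-; exists [::], p; rewrite Hx.
Qed.

Lemma find_iota_sat (P : pred nat) (m : nat) :
  (find P (iota 0 m) < m)%N -> P (find P (iota 0 m)).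
Proof.
move=> Hm; have Hhas : has P (iota 0 m) by rewrite has_find size_iota.
by have := nth_find 0%N Hhas; rewrite nth_iota // add0n.
Qed.

Section Reachability.
Variables (R : realFieldType) (n : nat) (rs : {set 'I_n}) (a : profile R n).

Local Notation E := (edge rs a set0).

Definition avoids (D : {set 'I_n}) (u : option 'I_n) : bool :=
  if u is Some k then k \notin D else true.

Lemma edge_avoid D u v : edge rs a D u v = [&& E u v, avoids D u & avoids D v].
Proof.
case: u => [i|]; case: v => [j|] //=; rewrite ?inE ?andbT ?andbF //.
  by case: (part a i); case: (part a j); case: (i \in D); case: (j \in D);
     case: (j \in rrep a i).
by case: (j \in rs); case: (part a j); case: (j \in D).
Qed.

Lemma path_avoid D x p : avoids D x ->
  path (edge rs a D) x p = path E x p && all (avoids D) p.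
Proof.
elim: p x => [|y p IHp] x Hx //=.
rewrite edge_avoid Hx /=; case Hy: (avoids D y); rewrite /= ?andbF //.
by rewrite IHp // andbT !andbA.
Qed.

Lemma reachP D i :
  reflect (exists p, [/\ path E None p, last None p = Some i & all (avoids D) p])
          (reach rs a D i).
Proof.
apply: (iffP connectP) => [[p Hp Hl] | [p [Hp Hl HD]]].
  move: Hp; rewrite (path_avoid _ (erefl : avoids D None)) => /andP[Hp HD].
  by exists p.
by exists p; rewrite ?(path_avoid _ (erefl : avoids D None)) ?Hp.
Qed.

Lemma reach0P i :
  reflect (exists p, path E None p /\ last None p = Some i) (reach rs a set0 i).
Proof.
apply: (iffP (reachP _ _)) => [[p [Hp Hl _]] | [p [Hp Hl]]]; exists p => //.
by split=> //; apply/allP => -[k|] _ //=; rewrite inE.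
Qed.

Lemma all_avoids1 x p : all (avoids [set x]) p = (Some x \notin p).
Proof.
elim: p => [|[k|] p IHp] //=; rewrite IHp !inE //=.
by rewrite (inj_eq Some_inj) eq_sym negb_or.
Qed.

Lemma unreach1_mem x i p : ~~ reach rs a [set x] i ->
  path E None p -> last None p = Some i -> Some x \in p.
Proof.
move=> Hi Hp Hl; apply/negPn/negP => Hx; move/negP: Hi; apply.
by apply/reachP; exists p; rewrite all_avoids1.
Qed.

Lemma strongE x y : strong rs a x y = reach rs a set0 y && ~~ reach rs a [set x] y.
Proof.
apply/minsetP/andP => [[Hcut Hmin] | [Hy Hcut]].
  split; last by [].
  apply/negPn/negP => H; have := Hmin set0 H (sub0set _).
  by move/setP/(_ x); rewrite !inE eqxx.
split=> // B HB; rewrite subset1 => /orP[/eqP // | /eqP HB0].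
by move: HB; rewrite HB0 /cutset Hy.
Qed.

Lemma prefix_path p u : path E None p -> u \in p ->
  exists q, [/\ path E None q, last None q = u, {subset q <= p}
              & (last None p != u -> size q < size p)%N].
Proof.
move=> Hp Hu; case/splitPr: Hu Hp => p1 p2.
rewrite cat_path => /andP[Hp1 /= /andP[Hu _]].
exists (rcons p1 u); rewrite rcons_path Hp1 Hu last_rcons; split=> //.
  by move=> z; rewrite mem_rcons mem_cat !inE => /orP[-> | ->]; rewrite ?orbT.
rewrite last_cat size_rcons size_cat; case: p2 => [|w p2] /=; first by rewrite eqxx.
by rewrite addnS ltnS -addn1 leq_add2l.
Qed.

Lemma reach_prefix p x : path E None p -> Some x \in p -> reach rs a set0 x.
Proof. by move=> Hp /(prefix_path Hp) [q [Hq Hl _ _]]; apply/reach0P; exists q. Qed.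

Lemma unreach1_suffix x u t p :
  path E (Some u) p -> last (Some u) p = Some t -> Some x \notin p ->
  ~~ reach rs a [set x] t -> ~~ reach rs a [set x] u.
Proof.
move=> Hp Hl Hx Ht; apply/negP => /reachP [q [Hq Hql Hqx]].
move/negP: Ht; apply; apply/reachP; exists (q ++ p).
by rewrite cat_path last_cat all_cat Hq Hql Hp Hl Hqx all_avoids1.
Qed.

Lemma strong_reach x y : strong rs a x y -> reach rs a set0 x.
Proof.
rewrite strongE => /andP[/reach0P [p [Hp Hl]] Hxy].
exact: reach_prefix Hp (unreach1_mem Hxy Hp Hl).
Qed.

Lemma strong_trans x y z : strong rs a x y -> strong rs a y z -> strong rs a x z.
Proof.
rewrite !strongE => /andP[_ Hxy] /andP[-> Hyz] /=.
apply/negP => /reachP [q [Hq Hql Hqx]].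
have [q' [Hq' Hq'l Hsub _]] := prefix_path Hq (unreach1_mem Hyz Hq Hql).
move/negP: Hxy; apply; apply/reachP; exists q'; split=> //.
by apply/allP => w /Hsub; apply: (allP Hqx).
Qed.

Lemma strong_total x y z : strong rs a x z -> strong rs a y z ->
  strong rs a x y \/ strong rs a y x.
Proof.
rewrite !strongE => /andP[Hz Hxz] /andP[_ Hyz].
have [p [Hp Hl]] := reach0P _ Hz.
have Yp := unreach1_mem Hyz Hp Hl.
have [p1 [p2 [Ep Yp2]]] := split_last_occurrence Yp.
move: (Hp); rewrite Ep cat_path => /andP[_ /= /andP[_ Hp2]].
have Hl2 : last (Some y) p2 = Some z by rewrite -Hl Ep last_cat.
case Xp2: (Some x \in p2); last first.
  left; rewrite (reach_prefix Hp Yp) /=.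
  by apply: (unreach1_suffix Hp2 Hl2 _ Hxz); rewrite Xp2.
right; have [p3 [p4 [Ep2 Xp4]]] := split_last_occurrence Xp2.
have Xp : Some x \in p by rewrite Ep mem_cat inE Xp2 !orbT.
rewrite (reach_prefix Hp Xp) /=.
move: Hp2 Hl2; rewrite Ep2 cat_path last_cat => /andP[_ /= /andP[_ Hp4]] Hl4.
apply: (unreach1_suffix Hp4 Hl4 _ Hyz).
by apply: contra Yp2; rewrite Ep2 mem_cat inE => ->; rewrite !orbT.
Qed.

Lemma layer_edge k u v : u \in layer rs a k -> E u v -> v \in layer rs a k.+1.
Proof.
move=> Hu Huv; rewrite /= !inE; apply/orP; right.
by apply/existsP; exists u; rewrite Hu.
Qed.

Lemma layer0 : None \in layer rs a 0.
Proof. by rewrite /= inE. Qed.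

Lemma path_layer k u p : u \in layer rs a k -> path E u p ->
  last u p \in layer rs a (k + size p).
Proof.
elim: p k u => [|v p IHp] k u Hu /=; first by rewrite addn0.
by case/andP=> Huv Hp; rewrite addnS -addSn; apply: IHp (layer_edge Hu Huv) Hp.
Qed.

Lemma layer_path k u : u \in layer rs a k ->
  exists p, [/\ path E None p, last None p = u & (size p <= k)%N].
Proof.
elim: k u => [|k IHk] u; first by rewrite /= inE => /eqP ->; exists [::].
rewrite /= !inE => /orP[/IHk [p [Hp Hl Hk]] | /existsP [x /andP[Hx Hxu]]].
  by exists p; split=> //; apply: leq_trans Hk _.
have [p [Hp Hl Hk]] := IHk x Hx; exists (rcons p u).
by rewrite rcons_path Hp Hl Hxu last_rcons size_rcons ltnS.
Qed.

Lemma depth_le u k : Some u \in layer rs a k -> (k <= n)%N -> (depth rs a u <= k)%N.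
Proof.
move=> Hu Hk; rewrite leqNgt; apply/negP => /(before_find 0%N).
by rewrite nth_iota ?ltnS // add0n Hu.
Qed.

Lemma layer_depth u k : Some u \in layer rs a k -> (k <= n)%N ->
  Some u \in layer rs a (depth rs a u) /\ (depth rs a u <= n)%N.
Proof.
move=> Hu Hk; have Hdn := leq_trans (depth_le Hu Hk) Hk.
by split=> //; apply: (find_iota_sat (P := fun k => Some u \in layer rs a k)).
Qed.

(* A shortest path from the seller visits each of the n buyers at most once. *)
Lemma reach_layer u : reach rs a set0 u ->
  exists2 k, (k <= n)%N & Some u \in layer rs a k.
Proof.
case/reach0P=> p [Hp]; case: (shortenP Hp) => q Hq Huniq _ Hl.
exists (size q).
  have := max_card (mem (None :: q)).
  by rewrite (card_uniqP Huniq) card_option card_ord.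
by have := path_layer layer0 Hq; rewrite Hl.
Qed.

Lemma strong_depth x y : strong rs a y x -> y != x ->
  (depth rs a y < depth rs a x)%N.
Proof.
rewrite strongE => /andP[Hx Hyx] Hne.
have [k Hk Hin] := reach_layer Hx.
have [Hd Hdn] := layer_depth Hin Hk.
have [p [Hp Hl Hs]] := layer_path Hd.
have [q [Hq Hql _ Hqs]] := prefix_path Hp (unreach1_mem Hyx Hp Hl).
have {}Hqs : (size q < size p)%N by apply: Hqs; rewrite Hl (inj_eq Some_inj) eq_sym.
have := path_layer layer0 Hq; rewrite Hql add0n => Hy.
apply: leq_ltn_trans (depth_le Hy _) (leq_trans Hqs Hs).
exact: ltnW (leq_trans Hqs (leq_trans Hs Hdn)).
Qed.

Lemma adj_path x p : path (adj a) x p -> path E (Some x) (map Some p).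
Proof.
elim: p x => [|y p IHp] x //= /andP[Hxy Hp]; rewrite IHp // andbT.
by move: Hxy; rewrite /adj /= !inE.
Qed.

Lemma strong_onpath x y w : strong rs a x y -> onpath a x y w ->
  w = x \/ strong rs a x w.
Proof.
move=> Sxy /existsP [t /existsP [k /and4P []]].
set p := take k t => Hp /eqP Hl /= /andP[Hxp _].
rewrite inE => /orP[/eqP -> | Hw]; [by left | right].
move: (adj_path Hp) Hl Hxp; case/splitPr: Hw => p1 p2.
rewrite -cat_rcons map_cat cat_path last_map last_rcons => /andP[H1 H2] Hl Hxp.
have [q [Hq Hql]] := reach0P _ (strong_reach Sxy).
move: Sxy; rewrite !strongE => /andP[_ Hny]; apply/andP; split.
  apply/reach0P; exists (q ++ map Some (rcons p1 w)).
  by rewrite cat_path last_cat Hq Hql H1 last_map last_rcons.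
apply: (unreach1_suffix H2 _ _ Hny).
  by rewrite last_map -Hl last_cat last_rcons.
rewrite mem_map; last exact: Some_inj.
by apply: contra Hxp; rewrite mem_cat => ->; rewrite orbT.
Qed.

End Reachability.

Local Open Scope ring_scope.

Section Mechanism.
Variables (R : realFieldType) (n : nat) (rs : {set 'I_n}) (a : profile R n).

Lemma vmax_ge0 D : 0 <= vmax a D.
Proof. by rewrite /vmax; elim/big_rec: _ => // j x _ Hx; rewrite le_max Hx orbT. Qed.

Lemma vmax_subset (A B : {set 'I_n}) : A \subset B -> vmax a A <= vmax a B.
Proof.
move=> /subsetP sAB; rewrite {1}/vmax; elim/big_ind: _ => [||j /sAB Bj].
- exact: vmax_ge0.
- by move=> x y Hx Hy; rewrite ge_max Hx Hy.
by rewrite /vmax (bigD1 j) //= le_max lexx.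
Qed.

Lemma Nminus_dominated (K1 K2 : {set 'I_n}) :
  (forall w, w \in K2 -> exists2 u, u \in K1 & Vset rs a w \subset Vset rs a u) ->
  Nminus rs a K1 \subset Nminus rs a K2.
Proof.
move=> dom; apply/subsetP => x; rewrite !inE => /andP[HK1 ->]; rewrite andbT.
apply: contra HK1 => /bigcupP [w Hw Hxw]; have [u Hu /subsetP sVwu] := dom w Hw.
by apply/bigcupP; exists u; last exact: sVwu.
Qed.

Lemma Nminus_subset (K1 K2 : {set 'I_n}) :
  K2 \subset K1 -> Nminus rs a K1 \subset Nminus rs a K2.
Proof.
by move=> /subsetP sK; apply: Nminus_dominated => w Hw; exists w; rewrite ?sK.
Qed.

Lemma Vset_strong x w : strong rs a x w -> Vset rs a w \subset Vset rs a x.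
Proof. by move=> Sxw; apply/subsetP => j; rewrite !inE; apply: strong_trans. Qed.

Variables (h : 'I_n) (gtb : {set 'I_n} -> 'I_n).
Local Notation C := (C rs a h).
Local Notation c := (c rs a h).

Lemma mem_C_strong x : x \in C -> strong rs a x h.
Proof. by rewrite /Defs.C /Cseq mem_sort mem_enum inE. Qed.

Lemma C_uniq : uniq C.
Proof. by rewrite /Defs.C /Cseq sort_uniq enum_uniq. Qed.

Lemma C_depth_sorted : sorted (fun x y => depth rs a x <= depth rs a y)%N C.
Proof. by apply: sort_sorted => x y; apply: leq_total. Qed.

Lemma strong_c_succ j : (j.+1 < size C)%N -> strong rs a (c j) (c j.+1).
Proof.
move=> Hj1; have Hj := ltnW Hj1.
have Hne : c j != c j.+1.
  by rewrite /Defs.c (nth_uniq h Hj Hj1 C_uniq) (ltn_eqF (ltnSn j)).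
have Hd : (depth rs a (c j) <= depth rs a (c j.+1))%N.
  have leq_depth_trans : transitive (fun x y => depth rs a x <= depth rs a y)%N.
    by move=> y x z; apply: leq_trans.
  by apply: (sorted_leq_nth leq_depth_trans (fun x => leqnn _) h C_depth_sorted);
    rewrite ?inE.
have Sj := mem_C_strong (mem_nth h Hj); have Sj1 := mem_C_strong (mem_nth h Hj1).
have [// | Sji] := strong_total Sj Sj1.
by have := strong_depth Sji; rewrite eq_sym ltnNge Hd => /(_ Hne).
Qed.

Lemma Nminus_c_Kset j : (j < size C)%N ->
  Nminus rs a [set c j] \subset Nminus rs a (Kset rs a h j).
Proof.
move=> Hj; rewrite /Kset; case: ifP => [Hj1 | _].
  have Sj := strong_c_succ Hj1.
  apply: Nminus_dominated => w; rewrite !inE => /orP[/eqP -> | /andP[_ Hw]].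
    by exists (c j); rewrite ?inE // Vset_strong.
  exists (c j); rewrite ?inE //.
  by case: (strong_onpath Sj Hw) => [-> | /Vset_strong].
by apply: Nminus_dominated => w; rewrite inE.
Qed.

Lemma alloc_index i : alloc rs a h i = (i \in C) && (index i C == widx rs a h).
Proof.
rewrite /alloc /Defs.c; apply/idP/idP => [/andP[Hw /eqP ->] | /andP[HiC /eqP <-]].
  by rewrite mem_nth // index_uniq ?C_uniq ?eqxx.
by rewrite index_mem HiC nth_index ?eqxx.
Qed.

Lemma winner_bid : (widx rs a h < size C)%N ->
  vrep a (c (widx rs a h)) = vmax a (Nminus rs a (Kset rs a h (widx rs a h))).
Proof. by rewrite /widx => /find_iota_sat /eqP. Qed.

Hypothesis gtbP : valid_tiebreak rs a gtb.

Lemma Rc_ge0 j : 0 <= Rc rs a h gtb j.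
Proof.
apply: divr_ge0; last by rewrite addr_ge0 ?ler0n.
rewrite subr_ge0 vmax_subset // Nminus_subset // setUS // /gset.
by case: eqP => [_ | /eqP HM]; rewrite ?sub0set // sub1set (gtbP HM).1.
Qed.

Lemma RM_ge0 i j : i \in Mseg rs a h j.-1 -> 0 <= RM rs a h i j.
Proof.
move=> Hi; apply: divr_ge0; last by rewrite addr_ge0 ?ler0n.
rewrite subr_ge0 vmax_subset // Nminus_subset //.
apply/subsetP => w; rewrite in_set2 in_setU1.
by case/orP=> [/eqP -> | ->]; rewrite ?Hi ?orbT.
Qed.

Lemma utility_chain_ge0 i : i \in C -> (index i C <= widx rs a h)%N ->
  0 <= utility rs a h gtb i (vrep a i).
Proof.
move=> HiC Hle; have Hj : (index i C < size C)%N by rewrite index_mem.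
have HK := vmax_subset (Nminus_c_Kset Hj).
have HR : 0 <= (if index i C == 0%N then 0 else Rc rs a h gtb (index i C)).
  by case: eqP; rewrite ?Rc_ge0.
rewrite /utility /payment alloc_index HiC Hle /=.
move: HK HR; set R0 := (if _ then _ else _) => HK HR.
case: ltngtP Hle => // [Hlt | Hw] _; first lra.
have -> : vrep a i = vmax a (Nminus rs a (Kset rs a h (index i C))).
  by rewrite Hw -winner_bid -Hw ?index_mem // /Defs.c nth_index.
lra.
Qed.

Lemma utility_off_chain_ge0 i vi :
  ~~ ((i \in C) && (index i C <= widx rs a h)%N) -> 0 <= utility rs a h gtb i vi.
Proof.
move=> Hoff; rewrite /utility /payment (negbTE Hoff).
have -> : alloc rs a h i = false.
  by apply: contraNF Hoff; rewrite alloc_index => /andP[-> /eqP ->] /=.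
case: ifP => [/find_iota_sat /and3P [_ _ /RM_ge0] | _]; last by rewrite subr0.
by rewrite sub0r opprK.
Qed.

End Mechanism.

Theorem theorem1 (R : realFieldType) (n : nat) (rs : {set 'I_n})
  (r : 'I_n -> {set 'I_n}) (v : 'I_n -> R) (a : profile R n)
  (h : 'I_n) (gtb : {set 'I_n} -> 'I_n) (i : 'I_n) (ri' : {set 'I_n}) :
  undirected r ->
  (forall j, 0 <= v j) ->
  feasible rs r a ->
  a i = Some (v i, ri') ->
  is_highest a h ->
  valid_tiebreak rs a gtb ->
  0 <= utility rs a h gtb i (v i).
Proof.
(* Individual rationality holds for every report profile: only truthful
   bidding by i and a valid tie-breaking rule are needed. *)
move=> _ _ _ Hai _ gtbP.
have -> : v i = vrep a i by rewrite /vrep Hai.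
case: (boolP ((i \in C rs a h) && (index i (C rs a h) <= widx rs a h)%N)).
  by case/andP; apply: utility_chain_ge0.
exact: utility_off_chain_ge0.
Qed.
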